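(* For every $n\ge1$, $|\mathcal{B}_n(123)|=C(\lceil n/2\rceil)$, where $C(m)=\frac{1}{m+1}\binom{2m}{m}$ is the $m$-th Catalan number.
   Context: A ballot permutation is a $\pi\in\mathfrak{S}_n$ such that every prefix $\pi_1\cdots\pi_i$ has at most as many descents ($\pi_j>\pi_{j+1}$) as ascents ($\pi_j<\pi_{j+1}$); $\mathcal{B}_n$ denotes the set of them. A permutation avoids the pattern $\sigma\in\mathfrak{S}_k$ if it has no subsequence order-isomorphic to $\sigma$; $\mathcal{B}_n(\sigma)$ is the set of $\sigma$-avoiding elements of $\mathcal{B}_n$. *)

From mathcomp Require Import all_boot all_fingroup.
Set Implicit Arguments. Unset Strict Implicit. Unset Printing Implicit Defensive.

(* Permutations of [n] are modeled as 'S_n = {perm 'I_n}, with positions and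
   values in {0,...,n-1}; pi i is the value at position i (0-based). *)

(* value of pi at position j (nat), n arbitrary default 0 outside range *)
Definition pval (n : nat) (pi : 'S_n) (j : nat) : nat :=
  match insub j with Some i => nat_of_ord (pi i) | None => 0 end.

(* number of descents / ascents among adjacent pairs (j, j+1) with j+1 < m,
   i.e. inside the prefix pi_1 ... pi_m *)
Definition prefix_des (n : nat) (pi : 'S_n) (m : nat) : nat :=
  \sum_(0 <= j < m.-1) (pval pi j.+1 < pval pi j).
Definition prefix_asc (n : nat) (pi : 'S_n) (m : nat) : nat :=
  \sum_(0 <= j < m.-1) (pval pi j < pval pi j.+1).

Definition ballot (n : nat) (pi : 'S_n) : bool :=
  [forall i : 'I_n.+1, prefix_des pi i <= prefix_asc pi i].

Definition contains (n k : nat) (pi : 'S_n) (sigma : 'S_k) : bool :=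
  [exists f : {ffun 'I_k -> 'I_n},
     [forall a : 'I_k, forall b : 'I_k,
        ((a < b) ==> (f a < f b)) &&
        ((sigma a < sigma b) == (pi (f a) < pi (f b)))]].

Definition avoids (n k : nat) (pi : 'S_n) (sigma : 'S_k) : bool :=
  ~~ contains pi sigma.

Definition pat123 : 'S_3 := 1%g.

Definition ballot_avoiding (n k : nat) (sigma : 'S_k) : {set 'S_n} :=
  [set pi : 'S_n | ballot pi && avoids pi sigma].

Definition catalan (m : nat) : nat := 'C(m.*2, m) %/ m.+1.

From Pilot Require Import Defs.
From mathcomp Require Import all_boot all_fingroup.
From mathcomp Require Import zify.
(* Re-import Defs so that its [pval] takes precedence over the [pval] of perm.v. *)
Import Defs.
Set Implicit Arguments. Unset Strict Implicit. Unset Printing Implicit Defensive.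

(* A boolean word is a ballot word if every suffix has at
      most as many letters [true] as [false].  Splitting on the first letter
      gives the reflection recurrence nballot n (a+1) = C(n,a+1) - C(n,a), so
      the ballot words of length n with n/2 letters [true] number
      C(ceil(n/2)) ([nballot_half]).
   2. Shape of B_n(123).  The ballot condition and 123-avoidance force p to
      zigzag up/down starting with an ascent; equivalently p is valley-shaped:
      the values at the valleys (even positions other than the last one)
      decrease, the other values decrease, and each valley lies below its
      right neighbour ([ballot_avoidingP]).
   3. Encoding.  Recording, for each value x in increasing order, whether x
      sits at a valley is a bijection from valley-shaped permutations onto
      ballot words with n/2 letters [true] ([valley_word_bij]); its inverse
      fills the valleys and the other positions with the two classes of
      values in decreasing order. *)

Fixpoint words (n : nat) : seq (seq bool) :=
  if n is n'.+1 then [seq true :: s | s <- words n'] ++ [seq false :: s | s <- words n']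
  else [:: [::]].

Fixpoint ballot_word (s : seq bool) : bool :=
  if s is _ :: s' then ballot_word s' && (count id s <= count negb s) else true.

Definition nballot (n a : nat) : nat :=
  count (fun s => ballot_word s && (count id s == a)) (words n).

Lemma mem_cons_map (c b : bool) (s : seq bool) (l : seq (seq bool)) :
  (b :: s \in [seq c :: x | x <- l]) = (b == c) && (s \in l).
Proof.
apply/mapP/andP => [[x xl [-> ->]]|[/eqP -> sl]]; last by exists s.
by split.
Qed.

Lemma mem_words n s : (s \in words n) = (size s == n).
Proof.
elim: n s => [|n IH] [|b s] //=; try by rewrite inE.
- by rewrite mem_cat; apply/negP => /orP [] /mapP [? ? //].
- by rewrite mem_cat !mem_cons_map IH eqSS; case: b; rewrite ?orbF.
Qed.

Lemma uniq_words n : uniq (words n).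
Proof.
elim: n => //= n IH; rewrite cat_uniq !map_inj_uniq // ?IH /=;
  try by move=> x y [].
rewrite andbT; apply/hasPn => x /mapP [y _ ->]; by apply/mapP => -[].
Qed.

Lemma ballot_word_count s : ballot_word s -> count id s <= count negb s.
Proof. by case: s => //= b s /andP []. Qed.

Lemma ballot_wordP s :
  ballot_word s <-> forall t, count id (drop t s) <= count negb (drop t s).
Proof.
elim: s => [|b s IH] /=; first by split => // _ [].
split => [/andP [/IH h1 h2] [|t] //=|h].
apply/andP; split; last exact: (h 0).
by apply/IH => t; apply: (h t.+1).
Qed.

Lemma count_true_false n s :
  s \in words n -> count id s + count negb s = n.
Proof. by rewrite mem_words count_predC => /eqP. Qed.

Lemma count_andl (T : Type) (c : bool) (p : pred T) (l : seq T) :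
  count (fun x => c && p x) l = if c then count p l else 0.
Proof. by case: c => //; rewrite count_pred0. Qed.

(* A word starting with [false] is a ballot word iff its tail is one. *)
Lemma nballot_false n a :
  count (preim (cons false) (fun s => ballot_word s && (count id s == a))) (words n)
  = nballot n a.
Proof.
apply: eq_in_count => s _ /=.
case: (ballot_word s) (@ballot_word_count s) => //= /(_ isT) h.
by case: eqP; rewrite ?andbT ?andbF // => _; apply: leqW.
Qed.

(* Splitting on the first letter: a word starting with [true] is ballot iff
   its tail is ballot and the whole word stays balanced. *)
Lemma nballot_S0 n : nballot n.+1 0 = nballot n 0.
Proof.
rewrite /nballot [words _]/= count_cat !count_map nballot_false.
by rewrite (@eq_count _ _ pred0) ?count_pred0 // => s /=; rewrite andbF.
Qed.

Lemma nballot_SS n a :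
  nballot n.+1 a.+1 = nballot n a.+1 + (if a.+1 <= n - a then nballot n a else 0).
Proof.
rewrite /nballot [words _]/= count_cat !count_map nballot_false addnC.
congr (_ + _); rewrite -count_andl; apply: eq_in_count => s s_word /=.
have := count_true_false s_word.
rewrite eqSS; case: eqP => [->|]; last by rewrite !andbF.
rewrite !andbT; case: (ballot_word s); rewrite /= ?andbF ?andbT // => total.
apply/idP/idP; lia.
Qed.

(* The all-[false] word is the only one with no letter [true]. *)
Lemma nballot_n0 n : nballot n 0 = 1.
Proof. by elim: n => // n IH; rewrite nballot_S0. Qed.

(* A ballot word has at most half of its letters equal to [true]. *)
Lemma nballot_over n a : n < a.*2 -> nballot n a = 0.
Proof.
move=> too_many; apply/eqP; rewrite -leqn0 leqNgt -has_count.
apply/hasPn => s s_word; apply/negP => /andP [/ballot_word_count balanced /eqP count_a].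
by have := count_true_false s_word; move: balanced; rewrite count_a; lia.
Qed.

(* Reflection principle, in recurrence form:
   nballot n a = C(n, a) - C(n, a - 1) whenever 0 < a and 2a <= n + 1. *)
Lemma nballot_binomial n a :
  a.+1.*2 <= n.+1 -> nballot n a.+1 + 'C(n, a) = 'C(n, a.+1).
Proof.
elim: n a => [|n IH] a small_a; first by move: small_a; lia.
rewrite nballot_SS.
have [balanced|unbalanced] := leqP (a.+1) (n - a); last first.
  have n_even : n = a.*2 by lia.
  rewrite addn0 nballot_over; last by lia.
  rewrite add0n n_even -[in RHS](@bin_sub a.*2.+1 a.+1) //; last by lia.
  congr 'C(_, _); lia.
rewrite binS.
case: a small_a balanced => [|a] small_a balanced.
  by have := IH 0 ltac:(lia); rewrite nballot_n0 !bin0 !bin1; lia.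
have IH_a1 := IH a.+1 ltac:(lia); have IH_a := IH a ltac:(lia).
rewrite binS; lia.
Qed.

Lemma nballot_catalan m : nballot m.*2 m = catalan m.
Proof.
case: m => [|m]; first by rewrite nballot_n0.
have reflection := @nballot_binomial m.+1.*2 m ltac:(lia).
have bin_ratio := mul_bin_left (m.+1.*2) m.
move: reflection bin_ratio; set c := 'C(_, m.+1); set d := 'C(_, m).
set x := nballot _ _ => reflection bin_ratio.
have d_mul : d = m.+1 * x.
  have : m.+1 * c = m.+2 * d by rewrite bin_ratio; congr (_ * _); lia.
  rewrite -reflection; nia.
rewrite /catalan -/c -reflection d_mul.
have -> : x + m.+1 * x = m.+2 * x by nia.
by rewrite mulKn.
Qed.

(* A balanced ballot word of length 2k+2 starts with [true]; removing it
   leaves the ballot words of length 2k+1 with k letters [true]. *)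
Lemma nballot_half n : nballot n (n %/ 2) = catalan (uphalf n).
Proof.
have [k [e|e]] : exists k, n = k.*2 \/ n = k.*2.+1 by exists n./2; lia.
- rewrite e uphalf_double -nballot_catalan; congr nballot; lia.
- rewrite e -nballot_catalan.
  have -> : uphalf k.*2.+1 = k.+1 by lia.
  have -> : k.*2.+1 %/ 2 = k by lia.
  have -> : k.+1.*2 = k.*2.+1.+1 by lia.
  rewrite nballot_SS (@nballot_over (k.*2.+1) k.+1) ?add0n; last by lia.
  by have -> : k.+1 <= k.*2.+1 - k by lia.
Qed.

Lemma pvalE n (p : 'S_n) (i : 'I_n) : pval p i = p i.
Proof. by rewrite /pval valK. Qed.

Lemma pval_ord n (p : 'S_n) i (lt_in : i < n) : pval p i = p (Ordinal lt_in).
Proof. by rewrite -pvalE. Qed.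

Lemma pval_lt n (p : 'S_n) i : i < n -> pval p i < n.
Proof. by move=> lt_in; rewrite (pval_ord p lt_in). Qed.

Lemma pval_inj n (p : 'S_n) i j : i < n -> j < n -> pval p i = pval p j -> i = j.
Proof.
move=> lt_in lt_jn; rewrite (pval_ord p lt_in) (pval_ord p lt_jn).
by move=> /val_inj/perm_inj [].
Qed.

Lemma pvalK n (p : 'S_n) i : i < n -> pval p^-1 (pval p i) = i.
Proof. by move=> lt_in; rewrite (pval_ord p lt_in) pvalE permK. Qed.

Lemma pvalKV n (p : 'S_n) x : x < n -> pval p (pval p^-1 x) = x.
Proof. by move=> lt_xn; rewrite (pval_ord p^-1 lt_xn) pvalE permKV. Qed.

Definition des_count (f : nat -> nat) (m : nat) : nat := \sum_(0 <= j < m) (f j.+1 < f j).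
Definition asc_count (f : nat -> nat) (m : nat) : nat := \sum_(0 <= j < m) (f j < f j.+1).

Lemma ballotE n (p : 'S_n) :
  ballot p <-> forall m, m < n -> des_count (pval p) m <= asc_count (pval p) m.
Proof.
split => [/forallP ballot_p m lt_mn|counts_p].
  by have := ballot_p (Ordinal (lt_mn : m.+1 < n.+1)).
apply/forallP => -[[|i] lt_in]; rewrite /prefix_des /prefix_asc /=.
  by rewrite !big_geq.
by apply: counts_p; rewrite -ltnS.
Qed.

Lemma contains123E n (p : 'S_n) : contains p pat123 <->
  exists a b c, [/\ a < b, b < c, c < n, pval p a < pval p b & pval p b < pval p c].
Proof.
split.
  case/existsP => F /forallP occ.
  have o0 : 0 < 3 by []. have o1 : 1 < 3 by []. have o2 : 2 < 3 by [].
  have := occ (Ordinal o0) => /forallP /(_ (Ordinal o1)) /andP [/implyP /(_ isT) lt_ab /eqP].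
  rewrite /pat123 !perm1 /= => up_ab.
  have := occ (Ordinal o1) => /forallP /(_ (Ordinal o2)) /andP [/implyP /(_ isT) lt_bc /eqP].
  rewrite /pat123 !perm1 /= => up_bc.
  exists (F (Ordinal o0)), (F (Ordinal o1)), (F (Ordinal o2)).
  by rewrite !pvalE -up_ab -up_bc.
move=> [a [b [c [lt_ab lt_bc lt_cn]]]].
have lt_an : a < n by lia.
have lt_bn : b < n by lia.
rewrite (pval_ord p lt_an) (pval_ord p lt_bn) (pval_ord p lt_cn) => up_ab up_bc.
set oa := Ordinal lt_an in up_ab up_bc *; set ob := Ordinal lt_bn in up_ab up_bc *.
set oc := Ordinal lt_cn in up_ab up_bc *.
have up_ac := ltn_trans up_ab up_bc.
apply/existsP.
exists [ffun x : 'I_3 => if val x == 0 then oa else if val x == 1 then ob else oc].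
apply/forallP => x; apply/forallP => y; rewrite /pat123 !perm1 !ffunE.
have o_ab : (oa < ob) = true by [].
have o_bc : (ob < oc) = true by [].
have o_ac : (oa < oc) = true by rewrite /=; lia.
have down_ba := leq_gtF (ltnW up_ab); have down_cb := leq_gtF (ltnW up_bc).
have down_ca := leq_gtF (ltnW up_ac).
case: x => [[|[|[|x]]] hx] //; case: y => [[|[|[|y]]] hy] //=;
  by rewrite ?up_ab ?up_bc ?up_ac ?down_ba ?down_cb ?down_ca ?ltnn ?o_ab ?o_bc ?o_ac.
Qed.

Definition zigzag_step (f : nat -> nat) (i : nat) : bool :=
  if i %% 2 == 0 then f i < f i.+1 else f i.+1 < f i.

Lemma zigzag_counts_even f k : (forall j, j < k.*2 -> zigzag_step f j) ->
  des_count f k.*2 = k /\ asc_count f k.*2 = k.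
Proof.
elim: k => [|k IH] zz; first by rewrite /des_count /asc_count !big_geq.
have [IH1 IH2] : des_count f k.*2 = k /\ asc_count f k.*2 = k.
  by apply: IH => j hj; apply: zz; lia.
have up := zz k.*2 ltac:(lia); have down := zz k.*2.+1 ltac:(lia).
rewrite /zigzag_step (_ : k.*2 %% 2 == 0) in up; last by lia.
rewrite /zigzag_step (_ : k.*2.+1 %% 2 == 0 = false) in down; last by lia.
rewrite /des_count /asc_count doubleS !big_nat_recr //= -/(des_count f k.*2).
rewrite -/(asc_count f k.*2) IH1 IH2 up down.
by rewrite (leq_gtF (ltnW up)) (leq_gtF (ltnW down)) !addn0 !addn1.
Qed.

Lemma zigzag_counts_odd f k : (forall j, j <= k.*2 -> zigzag_step f j) ->
  des_count f k.*2.+1 = k /\ asc_count f k.*2.+1 = k.+1.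
Proof.
move=> zz; have [IH1 IH2] := @zigzag_counts_even f k (fun j hj => zz j (ltnW hj)).
have up := zz k.*2 (leqnn _).
rewrite /zigzag_step (_ : k.*2 %% 2 == 0) in up; last by lia.
rewrite /des_count /asc_count !big_nat_recr //= -/(des_count f k.*2).
by rewrite -/(asc_count f k.*2) IH1 IH2 up (leq_gtF (ltnW up)) addn0 addn1.
Qed.

(* In a 123-avoiding ballot permutation the steps alternate up/down starting
   with an ascent: after a zigzag prefix of even length the ballot condition
   forces an ascent, and after an ascent 123-avoidance forces a descent. *)
Lemma ballot_avoid_zigzag n (p : 'S_n) : ballot p -> avoids p pat123 ->
  forall i, i.+1 < n -> zigzag_step (pval p) i.
Proof.
move=> /ballotE ballot_p /negP avoid_p.
suff zz : forall k i, i < k -> i.+1 < n -> zigzag_step (pval p) i.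
  by move=> i; apply: (zz i.+1).
elim=> [//|k IH] i; rewrite ltnS leq_eqVlt => /orP [/eqP ->|]; last exact: IH.
move=> lt_k1n; have neq_k : pval p k.+1 <> pval p k.
  by move/(pval_inj lt_k1n (ltnW lt_k1n)); lia.
rewrite /zigzag_step; case: ifP => k_even.
- have [des_k asc_k] : des_count (pval p) k = k./2 /\ asc_count (pval p) k = k./2.
    rewrite {1 3}(_ : k = k./2.*2); last by lia.
    by apply: zigzag_counts_even => j hj; apply: IH; lia.
  have := ballot_p _ lt_k1n.
  rewrite /des_count /asc_count !big_nat_recr //= -/(des_count _ k) -/(asc_count _ k).
  rewrite des_k asc_k; case: ltngtP => //; lia.
- have k_pos : 0 < k by lia.
  have prev_up := IH k.-1 ltac:(lia) ltac:(lia).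
  rewrite /zigzag_step (_ : k.-1 %% 2 == 0) ?prednK // in prev_up; last by lia.
  have [k_up|//|eq_k] := ltngtP (pval p k) (pval p k.+1); last by case: neq_k.
  case: avoid_p; apply/contains123E; exists k.-1, k, k.+1.
  by rewrite prednK //; split => //; lia.
Qed.

Definition valley (n i : nat) : bool := (i %% 2 == 0) && (i.+1 < n).

Lemma valley_half_inj n i j : i < n -> j < n -> valley n i = valley n j ->
  i %/ 2 = j %/ 2 -> i = j.
Proof.
rewrite /valley => lt_in lt_jn.
by case: (i %% 2 =P 0); case: (j %% 2 =P 0) => /=; lia.
Qed.

Definition valley_shape (n : nat) (f : nat -> nat) : Prop :=
  (forall i j, i < j -> j < n -> valley n i = valley n j -> f j < f i) /\
  (forall i, valley n i -> f i < f i.+1).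

(* Two positions of the same kind carrying increasing values would extend,
   through a neighbouring valley step, to an occurrence of 123. *)
Lemma ballot_avoid_valley_shape n (p : 'S_n) :
  ballot p -> avoids p pat123 -> valley_shape n (pval p).
Proof.
move=> ballot_p avoid_p; have zz := ballot_avoid_zigzag ballot_p avoid_p.
split; last by move=> i /andP [i_even lt_i1n]; have := zz i lt_i1n; rewrite /zigzag_step i_even.
move=> i j lt_ij lt_jn same_kind.
have neq_ij : pval p j <> pval p i by move/(pval_inj lt_jn (ltn_trans lt_ij lt_jn)); lia.
have [up|//|eq_ij] := ltngtP (pval p i) (pval p j); last by case: neq_ij.
case/negP: avoid_p; apply/contains123E.
case valley_j: (valley n j) in same_kind.
- move: same_kind valley_j => /andP [i_even _] /andP [j_even lt_j1n].
  have := zz j lt_j1n; rewrite /zigzag_step j_even => j_up.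
  by exists i, j, j.+1.
- have i_odd : (i %% 2 == 0) = false.
    by move: same_kind; rewrite /valley; case: (i %% 2 == 0) => //=; lia.
  have := zz i.-1 ltac:(lia); rewrite /zigzag_step (_ : i.-1 %% 2 == 0); last by lia.
  rewrite prednK => [prev_up|]; last by lia.
  by exists i.-1, i, j; split => //; lia.
Qed.

(* Conversely, a valley-shaped sequence zigzags: an odd step i -> i+1 goes
   from a non-valley down to a valley, or ends the sequence. *)
Lemma valley_shape_zigzag n f : valley_shape n f -> forall i, i.+1 < n -> zigzag_step f i.
Proof.
move=> [decr valley_up] i lt_i1n; rewrite /zigzag_step; case: ifP => i_even.
  by apply: valley_up; rewrite /valley i_even.
have [lt_i2n|last_step] := ltnP i.+2 n.
- have valley_prev : valley n i.-1 by rewrite /valley; apply/andP; split; lia.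
  have valley_next : valley n i.+1 by rewrite /valley; apply/andP; split; lia.
  have := decr i.-1 i.+1 ltac:(lia) lt_i1n (etrans valley_prev (esym valley_next)).
  have := valley_up i.-1 valley_prev; rewrite prednK; lia.
- by apply: decr => //; rewrite /valley i_even; apply/esym/negbTE; lia.
Qed.

(* A valley-shaped permutation is ballot (its steps zigzag) and avoids 123
   (among three positions two are of the same kind). *)
Lemma valley_shape_ballot_avoid n (p : 'S_n) :
  valley_shape n (pval p) -> ballot p && avoids p pat123.
Proof.
move=> shape_p; have zz := valley_shape_zigzag shape_p; have [decr _] := shape_p.
apply/andP; split.
  apply/ballotE => m lt_mn.
  have [k [mE|mE]] : exists k, m = k.*2 \/ m = k.*2.+1 by exists m./2; lia.
  - by rewrite mE; have [-> ->] := @zigzag_counts_even (pval p) k (fun j hj => zz j ltac:(lia)).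
  - by rewrite mE; have [-> ->] := @zigzag_counts_odd (pval p) k (fun j hj => zz j ltac:(lia)).
apply/negP => /contains123E [a [b [c [lt_ab lt_bc lt_cn up_ab up_bc]]]].
case eab: (valley n a == valley n b).
  by have := decr a b lt_ab ltac:(lia) (eqP eab); lia.
case ebc: (valley n b == valley n c).
  by have := decr b c lt_bc lt_cn (eqP ebc); lia.
have eac : valley n a = valley n c.
  by move: eab ebc; case: (valley n a); case: (valley n b); case: (valley n c).
by have := decr a c ltac:(lia) lt_cn eac; lia.
Qed.

Lemma ballot_avoidingP n (p : 'S_n) :
  reflect (valley_shape n (pval p)) (p \in ballot_avoiding n pat123).
Proof.
rewrite inE; apply: (iffP idP) => [/andP [ballot_p avoid_p]|/valley_shape_ballot_avoid //].
exact: ballot_avoid_valley_shape.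
Qed.

Definition valley_word n (p : 'S_n) : seq bool :=
  [seq valley n (pval p^-1 x) | x <- iota 0 n].

Lemma size_valley_word n (p : 'S_n) : size (valley_word p) = n.
Proof. by rewrite size_map size_iota. Qed.

Lemma perm_pval_iota n (p : 'S_n) : perm_eq (map (pval p) (iota 0 n)) (iota 0 n).
Proof.
apply: uniq_perm; rewrite ?iota_uniq //.
  rewrite map_inj_in_uniq ?iota_uniq // => i j; rewrite !mem_iota /= => lt_in lt_jn.
  exact: pval_inj.
move=> y; rewrite mem_iota /=; apply/mapP/idP => [[j]|lt_yn].
  by rewrite mem_iota => /andP [_ lt_jn] ->; apply: pval_lt.
exists (pval p^-1 y); first by rewrite mem_iota /= pval_lt.
by rewrite pvalKV.
Qed.

Lemma count_values n (p : 'S_n) (P : nat -> nat -> bool) :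
  count (fun y => P (pval p^-1 y) y) (iota 0 n) = count (fun j => P j (pval p j)) (iota 0 n).
Proof.
rewrite -(seq.permP (perm_pval_iota p)) count_map.
by apply: eq_in_count => j; rewrite mem_iota /= => lt_jn; rewrite /= pvalK.
Qed.

Lemma count_even m : count (fun i => i %% 2 == 0) (iota 0 m) = m.+1 %/ 2.
Proof.
elim: m => // m IH.
rewrite (_ : iota 0 m.+1 = iota 0 m ++ [:: m]); last by rewrite -addn1 iotaD.
rewrite count_cat IH /= addn0.
by case: eqP => /=; lia.
Qed.

Lemma count_valley n : count (valley n) (iota 0 n) = n %/ 2.
Proof.
case: n => // n.
rewrite (_ : iota 0 n.+1 = iota 0 n ++ [:: n]); last by rewrite -addn1 iotaD.
rewrite count_cat /= /valley ltnn andbF addn0.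
rewrite (@eq_in_count _ _ (fun i => i %% 2 == 0)); first by rewrite count_even; lia.
by move=> i; rewrite mem_iota => /andP [_ lt_in]; rewrite ltnS lt_in andbT.
Qed.

Lemma count_valley_word n (p : 'S_n) : count id (valley_word p) = n %/ 2.
Proof. by rewrite count_map (count_values p (fun j _ => valley n j)) count_valley. Qed.

Lemma count_drop_iota (T : Type) n (f : nat -> T) (q : pred T) t :
  count q (drop t (map f (iota 0 n))) = count (fun y => (t <= y) && q (f y)) (iota 0 n).
Proof.
rewrite -map_drop count_map drop_iota add0n.
have [le_tn|lt_nt] := leqP t n.
  rewrite -{2}(subnKC le_tn) iotaD count_cat.
  rewrite [X in _ = X + _](@eq_in_count _ _ pred0); last first.
    by move=> y; rewrite mem_iota => /andP [_ hy] /=; rewrite leqNgt hy.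
  rewrite count_pred0 add0n; apply: eq_in_count => y.
  by rewrite mem_iota => /andP [hy _]; rewrite /= hy.
rewrite (_ : n - t = 0) /=; last by lia.
rewrite (@eq_in_count _ _ pred0) ?count_pred0 //.
by move=> y; rewrite mem_iota => /andP [_ hy] /=; rewrite leqNgt (ltn_trans hy lt_nt).
Qed.

(* The word of a valley-shaped permutation is a ballot word: j |-> j+1 maps the
   valleys with value >= t injectively to non-valleys with value >= t. *)
Lemma valley_word_ballot n (p : 'S_n) : valley_shape n (pval p) -> ballot_word (valley_word p).
Proof.
move=> [_ valley_up]; apply/ballot_wordP => t; rewrite /valley_word !count_drop_iota.
rewrite (count_values p (fun j y => (t <= y) && id (valley n j))).
rewrite (count_values p (fun j y => (t <= y) && negb (valley n j))).
rewrite -!size_filter -(size_map succn); apply: uniq_leq_size.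
  by rewrite map_inj_uniq ?filter_uniq ?iota_uniq //; exact: succn_inj.
move=> x /mapP [j]; rewrite mem_filter mem_iota /= => /andP [/andP [le_t valley_j] lt_jn] ->.
move: (valley_j) => /andP [j_even lt_j1n].
rewrite mem_filter mem_iota /= lt_j1n andbT.
rewrite (leq_trans le_t (ltnW (valley_up j valley_j))) /=.
by apply/negP => /andP [j1_even _]; lia.
Qed.

Lemma count_same_kind_above n (p : 'S_n) i : valley_shape n (pval p) -> i < n ->
  count (fun y => (valley n (pval p^-1 y) == valley n i) && (pval p i < y)) (iota 0 n)
  = count (fun j => valley n j == valley n i) (iota 0 i).
Proof.
move=> [decr _] lt_in.
rewrite (count_values p (fun j y => (valley n j == valley n i) && (pval p i < y))).
rewrite (@eq_in_count _ _ (fun j => (valley n j == valley n i) && (j < i))); last first.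
  move=> j; rewrite mem_iota /= => lt_jn.
  case: eqP => //= same_kind.
  case: (ltngtP j i) => [lt_ji|lt_ij|->]; last by rewrite ltnn.
  - exact: decr.
  - by apply/negbTE; rewrite -leqNgt ltnW // decr.
rewrite -(subnKC (ltnW lt_in)) iotaD count_cat.
rewrite [X in _ + X = _](@eq_in_count _ _ pred0) ?count_pred0 ?addn0; last first.
  by move=> j; rewrite mem_iota => /andP [le_ij _] /=; rewrite ltnNge le_ij andbF.
by apply: eq_in_count => j; rewrite mem_iota => /andP [_ lt_ji] /=; rewrite lt_ji andbT.
Qed.

Lemma count_iota_lt (P : pred nat) k k' : k < k' -> P k ->
  count P (iota 0 k) < count P (iota 0 k').
Proof.
move=> lt_kk' P_k; rewrite -(subnKC (ltnW lt_kk')) iotaD count_cat add0n.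
have -> : iota k (k' - k) = k :: iota k.+1 (k' - k).-1 by case E: (k' - k) => //=; lia.
by rewrite /= P_k; lia.
Qed.

Lemma count_same_kind_inj n i i' : valley n i = valley n i' ->
  count (fun j => valley n j == valley n i) (iota 0 i)
  = count (fun j => valley n j == valley n i') (iota 0 i') -> i = i'.
Proof.
move=> same_kind; rewrite -same_kind => eq_count.
have [lt_ii'|lt_i'i|//] := ltngtP i i'.
- have := @count_iota_lt (fun j => valley n j == valley n i) _ _ lt_ii' (eqxx _).
  by rewrite eq_count ltnn.
- have kind_i' : valley n i' == valley n i by rewrite same_kind.
  have := @count_iota_lt (fun j => valley n j == valley n i) _ _ lt_i'i kind_i'.
  by rewrite -eq_count ltnn.
Qed.

Lemma valley_word_inj n (p q : 'S_n) : valley_shape n (pval p) -> valley_shape n (pval q) ->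
  valley_word p = valley_word q -> p = q.
Proof.
move=> shape_p shape_q /esym/eq_in_map same_word.
have same_pos : forall x, x < n -> pval p^-1 x = pval q^-1 x.
  move=> x lt_xn.
  have same_kind : valley n (pval q^-1 x) = valley n (pval p^-1 x).
    by apply: same_word; rewrite mem_iota.
  apply: (@count_same_kind_inj n); first by rewrite same_kind.
  rewrite -(count_same_kind_above shape_p (pval_lt p^-1 lt_xn)).
  rewrite -(count_same_kind_above shape_q (pval_lt q^-1 lt_xn)) !pvalKV // same_kind.
  by apply: eq_in_count => y; rewrite mem_iota /= => lt_yn; rewrite same_word // mem_iota.
apply: invg_inj; apply/permP => x; apply: val_inj.
by have := same_pos x (ltn_ord x); rewrite !pvalE.
Qed.

Lemma gtn_trans : transitive gtn.
Proof. exact: rev_trans ltn_trans. Qed.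

Lemma sorted_gtn_rev_filter (P : pred nat) m : sorted gtn (rev (filter P (iota 0 m))).
Proof.
rewrite rev_sorted; apply: sorted_filter; [exact: ltn_trans | exact: iota_ltn_sorted].
Qed.

Lemma sorted_gtn_count_ge s k : sorted gtn s -> k < size s ->
  count (fun y => nth 0 s k <= y) s = k.+1.
Proof.
elim: s k => [|a s IH] k //= sorted_as lt_ks.
move: sorted_as; rewrite (path_sortedE gtn_trans) => /andP [/allP below_a sorted_s].
have none_above : forall x, a <= x -> count (fun y => x <= y) s = 0.
  move=> x le_ax; rewrite (@eq_in_count _ _ pred0) ?count_pred0 //.
  by move=> y /below_a /= lt_ya; apply/negbTE; rewrite -ltnNge (leq_trans lt_ya le_ax).
case: k lt_ks => [|k] lt_ks /=; first by rewrite leqnn none_above.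
have lt_ka : nth 0 s k < a by apply/below_a/mem_nth.
by rewrite (ltnW lt_ka) IH.
Qed.

Lemma sorted_gtn_nth_ge s k x : sorted gtn s -> k < count (fun y => x <= y) s ->
  x <= nth 0 s k.
Proof.
elim: s k => [|a s IH] k //= sorted_as.
move: (sorted_as); rewrite (path_sortedE gtn_trans) => /andP [/allP below_a sorted_s].
case: k => [|k] /=.
  case: (leqP x a) => // lt_ax.
  rewrite (@eq_in_count _ _ pred0) ?count_pred0 //.
  by move=> y /below_a /= lt_ya; apply/negbTE; rewrite -ltnNge (ltn_trans lt_ya lt_ax).
by move=> lt_k; apply: IH => //; case: (x <= a) lt_k => /=; lia.
Qed.

Lemma sorted_gtn_nth_lt s i j : sorted gtn s -> i < j -> j < size s ->
  nth 0 s j < nth 0 s i.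
Proof.
move=> sorted_s lt_ij lt_js.
by apply: (sorted_ltn_nth gtn_trans) => //; rewrite inE (ltn_trans lt_ij lt_js).
Qed.

Section WordToPermutation.
Variables (n : nat) (s : seq bool).

Definition true_values : seq nat := rev (filter (nth false s) (iota 0 n)).
Definition false_values : seq nat := rev (filter (fun x => ~~ nth false s x) (iota 0 n)).

(* Fill the valleys with the [true] values and the other positions with the
   [false] values, each in decreasing order; the position i is the (i/2)-th of
   its kind. *)
Definition place (i : nat) : nat :=
  if valley n i then nth 0 true_values (i %/ 2) else nth 0 false_values (i %/ 2).

Lemma mem_true_values x : (x \in true_values) = (x < n) && nth false s x.
Proof. by rewrite mem_rev mem_filter mem_iota /= andbC. Qed.

Lemma mem_false_values x : (x \in false_values) = (x < n) && ~~ nth false s x.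
Proof. by rewrite mem_rev mem_filter mem_iota /= andbC. Qed.

Hypothesis size_s : size s = n.

Lemma s_as_map : s = map (nth false s) (iota 0 n).
Proof. by rewrite -{1}(mkseq_nth false s) size_s. Qed.

(* Ballot condition, at the suffix of values >= the k-th largest [true] value x:
   there are at least k+1 [false] values >= x, so the k-th largest [false]
   value exceeds x. *)
Lemma true_below_false k : ballot_word s -> k < size true_values ->
  nth 0 true_values k < nth 0 false_values k.
Proof.
move=> /ballot_wordP ballot_s lt_k; set x := nth 0 true_values k.
have := ballot_s x; rewrite s_as_map !count_drop_iota.
have -> : count (fun y => (x <= y) && id (nth false s y)) (iota 0 n)
          = count (fun y => x <= y) true_values.
  by rewrite count_rev count_filter; apply: eq_count => y /=; rewrite andbC.
have -> : count (fun y => (x <= y) && ~~ nth false s y) (iota 0 n)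
          = count (fun y => x <= y) false_values.
  by rewrite count_rev count_filter; apply: eq_count => y /=; rewrite andbC.
rewrite sorted_gtn_count_ge ?sorted_gtn_rev_filter // => many_false.
have le_x : x <= nth 0 false_values k.
  exact: sorted_gtn_nth_ge (sorted_gtn_rev_filter _ _) many_false.
have lt_kF : k < size false_values by apply: leq_trans many_false (count_size _ _).
have := mem_nth 0 lt_k; rewrite mem_true_values => /andP [_ x_true].
have := mem_nth 0 lt_kF; rewrite mem_false_values => /andP [_ y_false].
rewrite ltn_neqAle le_x andbT; apply: contraNneq y_false => <-.
by rewrite x_true.
Qed.

Hypothesis count_s : count id s = n %/ 2.

(* There are n/2 [true] values and n - n/2 [false] values, exactly as many as
   valleys and other positions. *)
Lemma size_true_values : size true_values = n %/ 2.
Proof. by rewrite size_rev size_filter -count_s [in RHS]s_as_map count_map. Qed.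

Lemma size_false_values : size false_values = n - n %/ 2.
Proof.
have := size_true_values; have := count_predC (nth false s) (iota 0 n).
rewrite /true_values /false_values !size_rev !size_filter size_iota.
rewrite (@eq_count _ (predC _) (fun x => ~~ nth false s x)) //; lia.
Qed.

Lemma place_index_lt i : i < n ->
  i %/ 2 < size (if valley n i then true_values else false_values).
Proof.
move=> lt_in; case: ifP => [/andP [i_even lt_i1n]|/negbT].
  by rewrite size_true_values; lia.
by rewrite size_false_values negb_and; lia.
Qed.

Lemma place_mem i : i < n ->
  place i \in (if valley n i then true_values else false_values).
Proof. by move=> /place_index_lt; rewrite /place; case: ifP => _; apply: mem_nth. Qed.

Lemma place_lt i : i < n -> place i < n.
Proof.
by move=> /place_mem; case: ifP => _; rewrite (mem_true_values, mem_false_values) => /andP [].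
Qed.

(* Different positions receive different values: same-kind positions have
   different halves, and the two lists are disjoint. *)
Lemma place_inj i j : i < n -> j < n -> place i = place j -> i = j.
Proof.
move=> lt_in lt_jn eq_place.
have mem_i := place_mem lt_in; have mem_j := place_mem lt_jn.
have same_kind : valley n i = valley n j.
  move: mem_i mem_j; rewrite eq_place.
  by do 2 case: ifP => _; rewrite ?mem_true_values ?mem_false_values //;
    case: (nth false s _); rewrite ?andbF.
apply: (valley_half_inj lt_in lt_jn same_kind); apply/eqP.
have uniq_values : uniq (if valley n i then true_values else false_values).
  by case: ifP => _; rewrite rev_uniq filter_uniq ?iota_uniq.
have := place_index_lt lt_in; have := place_index_lt lt_jn.
move: eq_place uniq_values; rewrite /place -same_kind.
by case: ifP => _ eq_nth uniq_values lt_j lt_i; rewrite -(nth_uniq 0 lt_i lt_j) // eq_nth.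
Qed.

Definition place_ord (i : 'I_n) : 'I_n := Ordinal (place_lt (ltn_ord i)).

Lemma place_ord_inj : injective place_ord.
Proof. by move=> i j /(congr1 val)/place_inj eq_ij; apply/val_inj/eq_ij. Qed.

Definition word_perm : 'S_n := perm place_ord_inj.

Lemma pval_word_perm i : i < n -> pval word_perm i = place i.
Proof. by move=> lt_in; rewrite (pval_ord _ lt_in) permE. Qed.

(* Each value x is placed at a position of the kind given by its letter. *)
Lemma valley_word_perm : valley_word word_perm = s.
Proof.
rewrite /valley_word [in RHS]s_as_map; apply/eq_in_map => x; rewrite mem_iota => /andP [_ lt_xn].
have lt_pos := pval_lt word_perm^-1 lt_xn.
have := place_mem lt_pos; rewrite -pval_word_perm // pvalKV //.
by case: ifP => _; rewrite (mem_true_values, mem_false_values) => /andP [_] // /negbTE.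
Qed.

(* Values are decreasing along each kind of position since both lists are, and
   a valley sits below its successor by the ballot condition. *)
Lemma word_perm_shape : ballot_word s -> valley_shape n (pval word_perm).
Proof.
move=> ballot_s; split.
  move=> i j lt_ij lt_jn same_kind.
  have lt_half : i %/ 2 < j %/ 2.
    rewrite ltn_neqAle leq_div2r ?(ltnW lt_ij) // andbT; apply/eqP => eq_half.
    have eq_ij := valley_half_inj (ltn_trans lt_ij lt_jn) lt_jn same_kind eq_half.
    by rewrite eq_ij ltnn in lt_ij.
  have := place_index_lt lt_jn.
  rewrite !pval_word_perm ?(ltn_trans lt_ij) // /place -same_kind.
  by case: ifP => _ lt_j; apply: sorted_gtn_nth_lt; rewrite ?sorted_gtn_rev_filter.
move=> i valley_i; move: (valley_i) => /andP [i_even lt_i1n].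
have not_valley_i1 : valley n i.+1 = false by rewrite /valley; apply/negbTE; lia.
have := place_index_lt (ltnW lt_i1n); rewrite valley_i => lt_i.
rewrite !pval_word_perm ?(ltnW lt_i1n) // /place valley_i not_valley_i1.
by rewrite (_ : i.+1 %/ 2 = i %/ 2); [apply: true_below_false | lia].
Qed.
End WordToPermutation.

Lemma valley_word_bij n :
  perm_eq (map (@valley_word n) (enum (ballot_avoiding n pat123)))
          (filter (fun s => ballot_word s && (count id s == n %/ 2)) (words n)).
Proof.
apply: uniq_perm.
- rewrite map_inj_in_uniq ?enum_uniq // => p q; rewrite !mem_enum.
  by move=> /ballot_avoidingP shape_p /ballot_avoidingP shape_q; apply: valley_word_inj.
- by rewrite filter_uniq // uniq_words.
move=> w; rewrite mem_filter mem_words; apply/mapP/idP => [[p]|].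
  rewrite mem_enum => /ballot_avoidingP shape_p ->.
  by rewrite valley_word_ballot // count_valley_word size_valley_word !eqxx.
move=> /andP [/andP [ballot_w /eqP count_w] /eqP size_w].
exists (word_perm size_w count_w); last by rewrite valley_word_perm.
by rewrite mem_enum; apply/ballot_avoidingP/word_perm_shape.
Qed.

Theorem mainTheorem8 (n : nat) : 1 <= n ->
  #|ballot_avoiding n pat123| = catalan (uphalf n).
Proof.
move=> _; rewrite cardE -(size_map (@valley_word n)) -nballot_half /nballot -size_filter.
exact/perm_size/valley_word_bij.
Qed.
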